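(* Let $\varphi\in\Delta_1^m$ and let $\mathcal{R}^{\mathrm{use}}_\varphi=\{p\in\mathcal{P}:\exists f\in\mathcal{W}^\varphi \text{ with } f_p>0\}$. Then: (1) there exists $f^\varphi\in\mathcal{W}^\varphi$ with $f^\varphi_p>0$ for all $p\in\mathcal{R}^{\mathrm{use}}_\varphi$; (2) for every $p\in\mathcal{P}$, $p\in\mathcal{R}^{\mathrm{use}}_\varphi$ if and only if $f^\varphi_{e_k}>0$ for all edges $e_k\in p$.
   Context: Let $\mathcal{G}=(\mathcal{V},\mathcal{E})$ be a finite directed graph with an origin $v_o$ and a destination $v_d$, and let $\mathcal{P}$ be the (finite) set of acyclic directed paths from $v_o$ to $v_d$, $n=|\mathcal{P}|$. The set of feasible path-flows is $\mathcal{H}=\{f\in\mathbb{R}^n_{\ge0}:\sum_{p\in\mathcal{P}}f_p=1\}$. For a path-flow $f$, the flow on edge $e_k$ is $f_{e_k}=\sum_{p\ni e_k}f_p$. There is a finite set of states $\Theta=\{\theta_1,\dots,\theta_m\}$; in each state $\theta_s$ each edge $e_k$ has a known cost function $C^{\theta_s}_{e_k}:\mathbb{R}_{\ge0}\to\mathbb{R}_{\ge0}$ that is continuous and strictly increasing. The cost of path $p$ in state $\theta_s$ is $C^{\theta_s}_p(f)=\sum_{e_k\in p}C^{\theta_s}_{e_k}(f_{e_k})$. For $\varphi\in\Delta_1^m:=\{x\in\mathbb{R}^m_{\ge0}:\sum_i x_i=1\}$ the expected costs are $C^\varphi_p(f)=\sum_{s}\varphi_sC^{\theta_s}_p(f)$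 and $C^\varphi_{e_k}(x)=\sum_s\varphi_sC^{\theta_s}_{e_k}(x)$. A flow $f\in\mathcal{H}$ is a $\varphi$-based Wardrop equilibrium ($\varphi$-WE) if for all $p\in\mathcal{P}$ with $f_p>0$ we have $C^\varphi_p(f)\le C^\varphi_r(f)$ for all $r\in\mathcal{P}$; $\mathcal{W}^\varphi$ denotes the set of $\varphi$-WE. It is known that all elements of $\mathcal{W}^\varphi$ induce the same edge-flows, and conversely any $f\in\mathcal{H}$ inducing these edge-flows lies in $\mathcal{W}^\varphi$; the common edge-flow on $e_k$ is denoted $f^\varphi_{e_k}$. *)

From HB Require Import structures.
From mathcomp Require Import all_boot all_order all_algebra.
From mathcomp Require Import all_classical all_reals topology normedtype.
Set Implicit Arguments. Unset Strict Implicit. Unset Printing Implicit Defensive.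
Import Order.TTheory GRing.Theory Num.Theory.
Local Open Scope ring_scope.

Section Routing.
Variables (V E : finType) (src dst : E -> V).

Fixpoint walk (v : V) (p : seq E) (w : V) : bool :=
  if p is e :: p' then (src e == v) && walk (dst e) p' w else v == w.

Definition acyc_path (vo vd : V) (p : seq E) : bool :=
  walk vo p vd && uniq (vo :: map dst p).

(* All edge sequences of length <= #|V| (an acyclic path has < #|V| edges). *)
Definition short_seqs : seq (seq E) :=
  flatten [seq [seq tval t | t : n.-tuple E] | n <- iota 0 #|V|.+1].

Definition Paths (vo vd : V) : seq (seq E) :=
  undup [seq p <- short_seqs | acyc_path vo vd p].

Variables (R : realType) (m : nat) (vo vd : V).
(* cost functions C^{theta_s}_e *)
Variable C : 'I_m -> E -> R -> R.

Definition edge_flow (f : seq E -> R) (e : E) : R :=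
  \sum_(p <- Paths vo vd | e \in p) f p.

Definition path_cost (phi : 'I_m -> R) (f : seq E -> R) (p : seq E) : R :=
  \sum_(s < m) phi s * \sum_(e <- p) C s e (edge_flow f e).

Definition feasible (f : seq E -> R) : Prop :=
  (forall p, p \in Paths vo vd -> 0 <= f p) /\ \sum_(p <- Paths vo vd) f p = 1.

Definition wardrop (phi : 'I_m -> R) (f : seq E -> R) : Prop :=
  feasible f /\
  forall p, p \in Paths vo vd -> 0 < f p ->
    forall r, r \in Paths vo vd -> path_cost phi f p <= path_cost phi f r.

Definition used_route (phi : 'I_m -> R) (p : seq E) : Prop :=
  p \in Paths vo vd /\ exists f, wardrop phi f /\ 0 < f p.

Definition in_simplex (phi : 'I_m -> R) : Prop :=
  (forall s, 0 <= phi s) /\ \sum_(s < m) phi s = 1.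

End Routing.

From mathcomp Require Import all_boot all_order all_algebra.
From mathcomp Require Import all_classical all_reals topology normedtype.
From mathcomp Require Import derive measure lebesgue_measure lebesgue_integral.
From mathcomp Require Import ring lra zify.
Import Order.TTheory GRing.Theory Num.Theory numFieldNormedType.Exports.
Set Implicit Arguments. Unset Strict Implicit. Unset Printing Implicit Defensive.
Local Open Scope ring_scope.
Local Open Scope classical_set_scope.

(* Edge flows of phi-equilibria are unique since the expected edge costs are
   strictly increasing: two equilibria satisfy each other's variational
   inequality.  An equilibrium exists as a minimiser of the Beckmann potential
   over the simplex of path flows, and averaging one equilibrium per used route
   gives an equilibrium using all of them, which is (1).  For (2), if every edge
   of p carries flow, choose for each edge e of p a used path through e.
   Cutting these paths at their edge of p and joining the prefix at each edge
   to the suffix at the previous one yields p together with vo-vd walks of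
   minimal cost, hence acyclic paths, with the same multiset of edges; so some
   flow can be moved onto p and these paths without changing any edge flow. *)

(** * Walks and acyclic paths *)

Section Walks.
Variables (V E : finType) (src dst : E -> V).
Local Notation walk := (walk src dst).

Lemma walk_last v s w : walk v s w -> w = last v (map dst s).
Proof. by elim: s v => [|e s IH] v /=; [move/eqP | case/andP=> _ /IH]. Qed.

Lemma walk_cat v s1 s2 w :
  walk v (s1 ++ s2) w =
  walk v s1 (last v (map dst s1)) && walk (last v (map dst s1)) s2 w.
Proof. by elim: s1 v => [|e s IH] v /=; rewrite ?eqxx // IH andbA. Qed.

Lemma walk_trans v u w s1 s2 : walk v s1 u -> walk u s2 w -> walk v (s1 ++ s2) w.
Proof. by move=> h1; rewrite walk_cat -(walk_last h1) h1. Qed.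

Lemma walk_split v s1 e s2 w :
  walk v (s1 ++ e :: s2) w -> walk v s1 (src e) /\ walk (dst e) s2 w.
Proof. by rewrite walk_cat /= => /and3P[h1 /eqP -> h2]. Qed.

Lemma walk_shorten v s w : walk v s w ->
  exists q, [/\ subseq q s, walk v q w & uniq (v :: map dst q)].
Proof.
elim: s v => [|e s IH] v /=; first by move=> vw; exists [::]; rewrite /= vw.
case/andP=> /eqP se /IH [q [sq wq uq]].
have sqe : subseq q (e :: s) := subseq_trans sq (subseq_cons s e).
have [|vq] := boolP (v \in dst e :: map dst q); last first.
  by exists (e :: q); rewrite /= se eqxx wq vq eqxx.
rewrite inE => /orP[/eqP ->|/mapP [e' e'q ->]]; first by exists q.
move: sq wq uq sqe; case/splitPr: e'q => q1 q2 sq wq uq sqe.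
exists q2; split; last 2 first.
- by case: (walk_split wq).
- by move: uq; rewrite map_cat -cat_cons cat_uniq => /and3P[].
apply: subseq_trans sqe; rewrite -cat_rcons; exact: suffix_subseq.
Qed.

Lemma closed_walk_prefix v s1 s2 :
  walk v s1 v -> uniq (v :: map dst (s1 ++ s2)) -> s1 = [::].
Proof.
case: s1 => // e s1 /walk_last /= hv.
rewrite map_cat /= => /andP[/negP[]].
by rewrite -cat_cons mem_cat hv mem_last.
Qed.

Lemma closed_walk_suffix s1 e s2 :
  walk (dst e) s2 (dst e) -> uniq (map dst (s1 ++ e :: s2)) -> s2 = [::].
Proof.
case: s2 => // e' s2 /walk_last /= hv.
rewrite map_cat cat_uniq /= => /and3P[_ _ /andP[/negP[]]].
by rewrite {1}hv mem_last.
Qed.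

Lemma pairmap_walk (T : eqType) (F : E -> E -> T) u e s w :
  walk u (e :: s) w -> forall x, x \in pairmap F e s ->
  exists a b, [/\ a \in e :: s, b \in e :: s, src b = dst a & x = F a b].
Proof.
elim: s e u => [|b s IH] a u //= /and3P[_ /eqP hb hw] x.
rewrite inE => /orP[/eqP ->|/(IH b (dst a))]; first by exists a, b; rewrite !inE !eqxx orbT.
rewrite /= hb eqxx => /(_ hw) [a' [b' [a's b's hab ->]]].
by exists a', b'; split=> //; exact: mem_behead.
Qed.
End Walks.

Lemma perm_flatten_splice (T : eqType) (A B : T -> seq T) e s :
  perm_eq (flatten [seq A x ++ x :: B x | x <- e :: s])
    (A e ++ (e :: s) ++ flatten (pairmap (fun x y => A y ++ B x) e s) ++ B (last e s)).
Proof.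
apply/permP => a; elim: s e => [|b s IH] e /=; rewrite !count_cat /=; first lia.
by move: (IH b); rewrite /= !count_cat /= !count_cat => ->; lia.
Qed.

Section SubseqSum.
Variables (T : eqType) (R : numDomainType) (c : T -> R).

Lemma subseq_sum_le q s : subseq q s -> {in s, forall x, 0 <= c x} ->
  \sum_(x <- q) c x <= \sum_(x <- s) c x.
Proof.
elim: s q => [|a s IH] [|b q] //= sq c0.
  by rewrite big_nil big_seq sumr_ge0 // => x /c0.
have ca : 0 <= c a by rewrite c0 ?mem_head.
have {}c0 : {in s, forall x, 0 <= c x} by move=> x xs; rewrite c0 // inE xs orbT.
rewrite [X in _ <= X]big_cons.
case: eqP sq => [-> /IH/(_ c0) le|_ /IH/(_ c0) le]; last exact: ler_wpDl.
by rewrite big_cons lerD2l.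
Qed.

Lemma subseq_sum_lt q s : subseq q s -> q != s -> {in s, forall x, 0 < c x} ->
  \sum_(x <- q) c x < \sum_(x <- s) c x.
Proof.
elim: s q => [|a s IH] [|b q] //= sq qs c0.
  rewrite big_nil big_cons ltr_pwDl ?c0 ?mem_head // big_seq sumr_ge0 // => x xs.
  by rewrite ltW // c0 // inE xs orbT.
have ca : 0 < c a by rewrite c0 ?mem_head.
have {}c0 : {in s, forall x, 0 < c x} by move=> x xs; rewrite c0 // inE xs orbT.
rewrite [X in _ < X]big_cons.
case: eqP sq qs => [-> sq qs|_ sq _].
  by rewrite big_cons ltrD2l IH //; apply: contraNneq qs => ->.
by apply: ltr_pwDl ca (subseq_sum_le sq _) => x /c0/ltW.
Qed.
End SubseqSum.

Section PathSet.
Variables (V E : finType) (src dst : E -> V) (vo vd : V).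
Local Notation P := (Paths src dst vo vd).

Lemma mem_Paths q : (q \in P) = walk src dst vo q vd && uniq (vo :: map dst q).
Proof.
rewrite mem_undup mem_filter /acyc_path; apply/andb_idr => /andP[_ uq].
apply/flatten_mapP; exists (size q).
  rewrite mem_iota /= add0n ltnS.
  have := max_card (mem (vo :: map dst q)).
  by rewrite (card_uniqP uq) /= size_map => /ltnW.
by apply/mapP; exists (in_tuple q); rewrite ?mem_enum.
Qed.

Lemma Paths_walk q : q \in P -> walk src dst vo q vd.
Proof. by rewrite mem_Paths => /andP[]. Qed.

Lemma Paths_uniq q : q \in P -> uniq q.
Proof. by rewrite mem_Paths => /and3P[_ _ /map_uniq]. Qed.

Lemma walk_shorten_Paths s : walk src dst vo s vd -> exists2 q, q \in P & subseq q s.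
Proof. by case/walk_shorten=> q [sq wq uq]; exists q; rewrite ?mem_Paths ?wq. Qed.

Lemma Paths_nil q : [::] \in P -> q \in P -> q = [::].
Proof.
move=> /Paths_walk /= /eqP def_vo; rewrite mem_Paths -def_vo => /andP[wq uq].
by apply: (closed_walk_prefix (s2 := [::]) wq); rewrite cats0.
Qed.

Lemma Paths_split_ends s1 e s2 : s1 ++ e :: s2 \in P ->
  (src e = vo -> s1 = [::]) /\ (dst e = vd -> s2 = [::]).
Proof.
rewrite mem_Paths => /andP[/walk_split[w1 w2] uq]; split=> [def_vo|def_vd].
  by rewrite def_vo in w1; exact: closed_walk_prefix w1 uq.
by case/andP: uq => _ uq; rewrite -def_vd in w2; exact: closed_walk_suffix w2 uq.
Qed.
End PathSet.

(** * Wardrop equilibria *)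

Lemma exists_pos_lower_bound (R : realDomainType) (T : eqType) (s : seq T)
    (F : T -> R) :
  {in s, forall x, 0 < F x} -> exists2 d : R, 0 < d & {in s, forall x, d <= F x}.
Proof.
elim: s => [|a s IH] F_gt0; first by exists 1.
have [|d d0 dF] := IH; first by move=> x xs; rewrite F_gt0 // inE xs orbT.
exists (Num.min d (F a)); first by rewrite lt_min d0 F_gt0 ?mem_head.
by move=> x; rewrite inE ge_min => /orP[/eqP->|/dF->]; rewrite ?lexx ?orbT.
Qed.

Lemma sumr_const_seq (V : nmodType) (I : Type) (r : seq I) (x : V) :
  \sum_(i <- r) x = x *+ size r.
Proof. by rewrite big_const_seq count_predT; elim: (size r) => //= n ->; rewrite mulrS. Qed.

Lemma sumr_indicator {R : pzSemiRingType} (I : finType) (Q : pred I) (j : I) :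
  \sum_(k | Q k) ((k == j)%:R : R) = (Q j)%:R.
Proof.
rewrite big_mkcond (bigD1 j) //= eqxx big1 ?addr0 => [|k /negbTE->]; first by case: (Q j).
by case: (Q k).
Qed.

Section Equilibrium.
Variables (V E : finType) (src dst : E -> V) (vo vd : V) (R : realType) (m : nat).
Variables (C : 'I_m -> E -> R -> R) (phi : 'I_m -> R).
Hypothesis C_incr : forall s e (x y : R), 0 <= x -> x < y -> C s e x < C s e y.
Hypothesis C_ge0 : forall s e (x : R), 0 <= x -> 0 <= C s e x.
Hypothesis phi_simplex : in_simplex phi.
Local Notation P := (Paths src dst vo vd).
Local Notation edge_flow := (edge_flow src dst vo vd).
Local Notation path_cost := (path_cost src dst vo vd C phi).
Local Notation feasible := (feasible src dst vo vd).
Local Notation wardrop := (wardrop src dst vo vd C phi).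

Definition edge_cost e x := \sum_(s < m) phi s * C s e x.

Lemma phi_ge0 s : 0 <= phi s.
Proof. by case: phi_simplex. Qed.

Lemma simplex_has_pos : exists s, 0 < phi s.
Proof.
apply/not_existsP => phi_le0; case: phi_simplex => _.
suff -> : \sum_(s < m) phi s = 0 by move/eqP; rewrite eq_sym oner_eq0.
by apply: big1 => s _; apply/eqP; rewrite eq_le phi_ge0 andbT leNgt; exact/negP/phi_le0.
Qed.

Lemma edge_cost_ge0 e x : 0 <= x -> 0 <= edge_cost e x.
Proof. by move=> x0; rewrite sumr_ge0 // => s _; rewrite mulr_ge0 ?phi_ge0 ?C_ge0. Qed.

Lemma edge_cost_lt e x y : 0 <= x -> x < y -> edge_cost e x < edge_cost e y.
Proof.
move=> x0 xy; have [s0 phi_s0] := simplex_has_pos.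
rewrite -subr_gt0 -sumrB (bigD1 s0) //= -mulrBr ltr_pwDl ?mulr_gt0 ?subr_gt0 //.
  exact: C_incr.
by rewrite sumr_ge0 // => s _; rewrite -mulrBr mulr_ge0 ?phi_ge0 // subr_ge0 ltW ?C_incr.
Qed.

Lemma path_costE (f : seq E -> R) q :
  path_cost f q = \sum_(e <- q) edge_cost e (edge_flow f e).
Proof.
by rewrite /path_cost exchange_big; apply: eq_bigr => s _; rewrite big_distrr.
Qed.

Lemma edge_cost_le e x y : 0 <= x -> x <= y -> edge_cost e x <= edge_cost e y.
Proof. by move=> x0; rewrite le_eqVlt => /predU1P[->//|/(edge_cost_lt e x0)/ltW]. Qed.

Lemma edge_cost_gt0 e x : 0 < x -> 0 < edge_cost e x.
Proof. by move=> x0; rewrite (le_lt_trans (edge_cost_ge0 e (lexx 0))) ?edge_cost_lt. Qed.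

Lemma edge_flow_ge0 (f : seq E -> R) e : feasible f -> 0 <= edge_flow f e.
Proof. by case=> f0 _; rewrite /edge_flow big_seq_cond sumr_ge0 // => q /andP[/f0]. Qed.

Lemma path_flow_le_edge_flow (f : seq E -> R) p e : feasible f -> p \in P -> e \in p ->
  f p <= edge_flow f e.
Proof.
case=> f0 _ pP ep; rewrite /edge_flow big_mkcond (bigD1_seq p) ?undup_uniq //= ep.
by rewrite lerDl big_seq_cond sumr_ge0 // => q /andP[/f0 ? _]; case: ifP.
Qed.

Lemma feasible_has_pos (f : seq E -> R) : feasible f -> exists2 p, p \in P & 0 < f p.
Proof.
case=> f0 f1; apply/not_exists2P => f_le0; move/eqP: f1; apply/negP.
rewrite lt_eqF // (@le_lt_trans _ _ 0) // big_seq sumr_le0 // => q qP.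
by rewrite leNgt; apply/negP => fq; case: (f_le0 q).
Qed.

Lemma wardrop_min_cost (f : seq E -> R) : wardrop f -> exists mu,
  (forall q, q \in P -> mu <= path_cost f q) /\
  (forall q, q \in P -> 0 < f q -> path_cost f q = mu).
Proof.
case=> ff f_eq; have [p pP fp] := feasible_has_pos ff.
exists (path_cost f p); split=> [q qP|q qP fq]; first exact: f_eq.
by apply/le_anti; rewrite !f_eq.
Qed.

Lemma sum_path_cost_mul (f h : seq E -> R) :
  \sum_(q <- P) path_cost f q * h q =
  \sum_(e : E) edge_cost e (edge_flow f e) * edge_flow h e.
Proof.
transitivity (\sum_(q <- P) \sum_(e in q) edge_cost e (edge_flow f e) * h q).
  rewrite big_seq [RHS]big_seq; apply: eq_bigr => q /Paths_uniq uq.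
  by rewrite path_costE (big_uniq _ uq) mulr_suml.
rewrite (exchange_big_dep xpredT) //=; apply: eq_bigr => e _.
by rewrite /edge_flow big_distrr.
Qed.

Lemma wardrop_variational (f g : seq E -> R) : wardrop f -> feasible g ->
  \sum_(e : E) edge_cost e (edge_flow f e) * edge_flow f e <=
  \sum_(e : E) edge_cost e (edge_flow f e) * edge_flow g e.
Proof.
move=> wf [g0 g1]; have [[f0 f1] _] := wf; have [mu [mu_le mu_eq]] := wardrop_min_cost wf.
rewrite -!sum_path_cost_mul; apply: (@le_trans _ _ mu).
  rewrite -[X in _ <= X]mulr1 -f1 big_distrr /= big_seq [X in _ <= X]big_seq.
  apply: ler_sum => q qP; have [->|fq] := eqVneq (f q) 0; first by rewrite !mulr0.
  by rewrite mu_eq // lt0r fq f0.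
rewrite -[X in X <= _]mulr1 -g1 big_distrr /= big_seq [X in _ <= X]big_seq.
by apply: ler_sum => q qP; apply: ler_wpM2r; [exact: g0 | exact: mu_le].
Qed.

Lemma edge_cost_cross_gt0 e x y : 0 <= x -> 0 <= y -> x != y ->
  0 < (edge_cost e x - edge_cost e y) * (x - y).
Proof.
move=> x0 y0; case: (ltgtP x y) => // [xy|yx] _.
  by rewrite nmulr_rgt0 ?subr_lt0 // edge_cost_lt.
by rewrite mulr_gt0 // subr_gt0 // edge_cost_lt.
Qed.

Lemma wardrop_edge_flow_eq (f g : seq E -> R) : wardrop f -> wardrop g ->
  forall e, edge_flow f e = edge_flow g e.
Proof.
move=> wf wg e; apply/eqP/negPn/negP => fg_e.
have ff := proj1 wf; have fg := proj1 wg.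
pose F e := (edge_cost e (edge_flow f e) - edge_cost e (edge_flow g e)) *
            (edge_flow f e - edge_flow g e).
have F_gt0 e' : edge_flow f e' != edge_flow g e' -> 0 < F e'.
  by apply: edge_cost_cross_gt0; exact: edge_flow_ge0.
have F_ge0 e' : 0 <= F e'.
  have [fg_e'|/F_gt0/ltW//] := eqVneq (edge_flow f e') (edge_flow g e').
  by rewrite /F fg_e' !subrr mul0r.
have : 0 < \sum_e' F e' by rewrite (bigD1 e) // ltr_pwDl ?F_gt0 ?sumr_ge0.
apply/negP; rewrite -leNgt.
have := wardrop_variational wf fg; have := wardrop_variational wg ff.
rewrite -subr_le0 -sumrB => vi_g; rewrite -subr_le0 -sumrB => vi_f.
have := lerD vi_f vi_g; rewrite addr0 -big_split; apply: le_trans.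
by rewrite le_eqVlt; apply/orP; left; apply/eqP/eq_bigr => e' _ /=; rewrite /F; ring.
Qed.

Lemma path_cost_eq (f g : seq E -> R) :
  (forall e, edge_flow f e = edge_flow g e) -> path_cost f =1 path_cost g.
Proof. by move=> fg q; rewrite !path_costE; apply: eq_bigr => e _; rewrite fg. Qed.

Lemma sum_Paths_count_mem (F : seq E -> R) (L : seq (seq E)) : {subset L <= P} ->
  \sum_(q <- P) F q *+ count_mem q L = \sum_(w <- L) F w.
Proof.
elim: L => [|w L IH] LP; first by rewrite big_nil big1.
rewrite big_cons -IH => [|q qL]; last by rewrite LP // inE qL orbT.
under eq_bigr do rewrite /= mulrnDr.
rewrite big_split /= (bigD1_seq w) ?LP ?mem_head ?undup_uniq //= eqxx.
by rewrite big1 ?addr0 // => q /negbTE; rewrite eq_sym => ->.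
Qed.

Lemma sum_edge_count_mem (x : R) (L : seq (seq E)) e : {subset L <= P} ->
  \sum_(q <- P | e \in q) x *+ count_mem q L = x *+ count_mem e (flatten L).
Proof.
move=> LP; rewrite big_mkcond.
transitivity (\sum_(q <- P) x *+ (e \in q) *+ count_mem q L).
  by apply: eq_bigr => q _; case: ifP; rewrite ?mul0rn.
rewrite sum_Paths_count_mem // sumrMnr count_flatten sumnE big_map.
congr (_ *+ _); apply: eq_big_seq => w wL.
by rewrite count_uniq_mem ?(Paths_uniq (LP w wL)).
Qed.

Lemma wardrop_mean (I : eqType) (r : seq I) (F : I -> seq E -> R) :
  r != [::] -> (forall i, wardrop (F i)) -> exists g, wardrop g /\
    forall i q, i \in r -> q \in P -> 0 < F i q -> 0 < g q.
Proof.
case: r => // i0 r' _ wF; set r := i0 :: r'.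
have n_gt0 : 0 < (size r)%:R :> R by rewrite ltr0n.
have F0 i q : q \in P -> 0 <= F i q by have [[F0 _] _] := wF i; exact: F0.
pose g q := (\sum_(i <- r) F i q) / (size r)%:R.
have g_ef e : edge_flow g e = edge_flow (F i0) e.
  rewrite /edge_flow -mulr_suml exchange_big /=.
  under eq_bigr do rewrite -/(edge_flow _ _) (wardrop_edge_flow_eq (wF _) (wF i0)).
  by rewrite sumr_const_seq -[_ *+ _]mulr_natr mulfK ?gt_eqF.
have g_cost i : path_cost (F i) =1 path_cost g.
  by apply: path_cost_eq => e; rewrite g_ef (wardrop_edge_flow_eq (wF i) (wF i0)).
have g_pos i q : i \in r -> q \in P -> 0 < F i q -> 0 < g q.
  move=> ir qP Fq; rewrite divr_gt0 // (big_rem i) // ltr_pwDl //.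
  by apply: sumr_ge0 => j _; rewrite F0.
exists g; split=> //; split; first split.
- by move=> q qP; rewrite divr_ge0 ?ler0n //; apply: sumr_ge0 => i _; rewrite F0.
- rewrite -mulr_suml exchange_big /=.
  rewrite (eq_bigr (fun=> 1)) => [|i _]; last by have [[_ ->]] := wF i.
  by rewrite sumr_const_seq -[_ *+ _]mulr_natr mul1r divff ?gt_eqF.
move=> q qP gq p pP; have [i _ Fiq] : exists2 i, i \in r & 0 < F i q.
  apply/not_exists2P => F_le0; move: gq; apply/negP; rewrite -leNgt.
  rewrite pmulr_lle0 ?invr_gt0 // big_seq sumr_le0 // => i ir.
  by rewrite leNgt; apply/negP => Fiq; case: (F_le0 i).
by rewrite -!(g_cost i); have [_ ->] := wF i.
Qed.

Section MinimumCost.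
Variables (f : seq E -> R) (mu : R).
Hypothesis wf : wardrop f.
Hypothesis mu_le : forall q, q \in P -> mu <= path_cost f q.
Hypothesis mu_eq : forall q, q \in P -> 0 < f q -> path_cost f q = mu.

(* Moving a little flow from the paths of L2 to those of L1 preserves every edge flow. *)
Lemma wardrop_reroute (L1 L2 : seq (seq E)) :
  {subset L1 <= P} -> {subset L2 <= P} -> size L1 = size L2 ->
  perm_eq (flatten L1) (flatten L2) ->
  {in L1, forall q, path_cost f q = mu} -> {in L2, forall q, 0 < f q} ->
  exists g, wardrop g /\ {in L1, forall q, 0 < g q}.
Proof.
move=> L1P L2P sizeL permL cost1 pos2; have [[f0 f1] _] := wf.
have [d d0 d_le] := exists_pos_lower_bound pos2.
pose eps := d / (size L2).+1%:R.
have eps0 : 0 < eps by rewrite divr_gt0.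
have eps_le q : q \in P -> eps *+ count_mem q L2 <= f q.
  move=> qP; have [qL2|/count_memPn->] := boolP (q \in L2); last by rewrite f0.
  have eps_n : eps *+ (size L2).+1 = d by rewrite -mulr_natr divfK // pnatr_eq0.
  apply: le_trans (d_le q qL2); rewrite -eps_n ler_pMn2l //.
  exact: leq_trans (count_size _ _) (leqnSn _).
pose g q := f q + eps *+ count_mem q L1 - eps *+ count_mem q L2.
have g_ef e : edge_flow g e = edge_flow f e.
  rewrite /edge_flow sumrB big_split /= !sum_edge_count_mem //.
  by rewrite (permP permL) addrK.
have gP : feasible g.
  split=> [q qP|]; first by rewrite /g addrAC addr_ge0 ?subr_ge0 ?eps_le ?mulrn_wge0 ?ltW.
  rewrite sumrB big_split /= f1 !(sum_Paths_count_mem (fun=> eps)) //.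
  by rewrite !sumr_const_seq sizeL addrK.
have g_cost := path_cost_eq g_ef.
exists g; split; last first.
  move=> q qL1; rewrite /g addrAC; apply: ltr_wpDl; first by rewrite subr_ge0 eps_le ?L1P.
  by rewrite mulrn_wgt0 // -has_count has_pred1.
split=> // q qP gq r rP; rewrite !g_cost; apply: le_trans (mu_le rP).
have [qL1|qL1] := boolP (q \in L1); first by rewrite cost1.
rewrite mu_eq //; apply: lt_le_trans gq _.
by rewrite /g (count_memPn qL1) mulr0n addr0 lerBlDr lerDl mulrn_wge0 ?ltW.
Qed.

Local Notation walk_cost w := (\sum_(e <- w) edge_cost e (edge_flow f e)).

Lemma walk_cost_ge w : walk src dst vo w vd -> mu <= walk_cost w.
Proof.
case/walk_shorten_Paths=> q qP sq; apply: le_trans (mu_le qP) _.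
rewrite path_costE; apply: subseq_sum_le sq _ => e _.
by rewrite edge_cost_ge0 ?edge_flow_ge0 //; case: wf.
Qed.

Lemma walk_min_cost_Paths w : walk src dst vo w vd ->
  {in w, forall e, 0 < edge_flow f e} -> walk_cost w <= mu -> w \in P.
Proof.
move=> ww w_pos w_le; have [q qP sq] := walk_shorten_Paths ww.
have [<-//|qw] := eqVneq q w.
have := mu_le qP; rewrite path_costE leNgt => /negP[].
by apply: lt_le_trans w_le; apply: subseq_sum_lt sq qw _ => e /w_pos/edge_cost_gt0.
Qed.

Lemma edge_flow_gt0_path e : 0 < edge_flow f e -> exists2 q, q \in P & 0 < f q /\ e \in q.
Proof.
move=> ef_pos; apply/not_exists2P => no_q; move: ef_pos; apply/negP; rewrite -leNgt.
rewrite /edge_flow big_seq_cond sumr_le0 // => q /andP[qP eq].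
by rewrite leNgt; apply/negP => fq; case: (no_q q) => //; apply; split.
Qed.

(* The crossed walk A1 a b B2 costs at least mu, so A2 ++ B1 costs at most mu;
   a walk over edges of positive cost that cheap has no cycle. *)
Lemma Paths_cross_splice a b A1 B1 A2 B2 : src b = dst a ->
  A1 ++ a :: B1 \in P -> 0 < f (A1 ++ a :: B1) ->
  A2 ++ b :: B2 \in P -> 0 < f (A2 ++ b :: B2) ->
  A2 ++ B1 \in P /\ walk_cost (A2 ++ B1) = mu.
Proof.
move=> ab q1P f1 q2P f2.
have [wA1 wB1] := walk_split (Paths_walk q1P).
have [wA2 wB2] := walk_split (Paths_walk q2P).
have wab : walk src dst (src a) (a :: b :: B2) vd by rewrite /= eqxx ab eqxx.
have long := walk_cost_ge (walk_trans wA1 wab).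
have short : walk src dst vo (A2 ++ B1) vd by apply: walk_trans wA2 _; rewrite ab.
have := mu_eq q1P f1; have := mu_eq q2P f2; rewrite !path_costE => cost2 cost1.
have short_le : walk_cost (A2 ++ B1) <= mu.
  by move: long cost1 cost2; rewrite !big_cat !big_cons /=; lra.
split; last by apply/le_anti; rewrite short_le walk_cost_ge.
apply: walk_min_cost_Paths short _ short_le => e; rewrite mem_cat => /orP[eA|eB].
  by apply: lt_le_trans f2 (path_flow_le_edge_flow (proj1 wf) q2P _); rewrite ?mem_cat ?eA.
apply: lt_le_trans f1 (path_flow_le_edge_flow (proj1 wf) q1P _).
by rewrite mem_cat inE eB !orbT.
Qed.

Lemma splice_used_paths e1 s (qf : E -> seq E) : e1 :: s \in P ->
  {in e1 :: s, forall e, [/\ qf e \in P, 0 < f (qf e) & e \in qf e]} ->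
  exists2 X, {in X, forall w, w \in P /\ walk_cost w = mu} &
    size X = size s /\ perm_eq (flatten ((e1 :: s) :: X)) (flatten (map qf (e1 :: s))).
Proof.
set p := e1 :: s => pP qfP; have wp := Paths_walk pP.
pose A e := take (index e (qf e)) (qf e).
pose B e := drop (index e (qf e)).+1 (qf e).
have qf_split e : e \in p -> qf e = A e ++ e :: B e.
  case/qfP=> _ _ eq; rewrite /A /B -{1}(cat_take_drop (index e (qf e)) (qf e)).
  by rewrite (drop_nth e) ?index_mem ?nth_index.
exists (pairmap (fun a b => A b ++ B a) e1 s).
  move=> _ /(pairmap_walk wp)[a [b [ap bp ab ->]]].
  have [aP fa _] := qfP a ap; have [bP fb _] := qfP b bp.
  rewrite (qf_split a ap) in aP fa; rewrite (qf_split b bp) in bP fb.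
  exact: Paths_cross_splice ab aP fa bP fb.
split; first by rewrite size_pairmap.
have A_e1 : A e1 = [::].
  have [+ _ _] := qfP e1 (mem_head _ _); rewrite qf_split ?mem_head // => /Paths_split_ends.
  by case=> -> //; case/andP: wp => /eqP.
have B_last : B (last e1 s) = [::].
  have [+ _ _] := qfP _ (mem_last e1 s); rewrite qf_split ?mem_last // => /Paths_split_ends.
  by case=> _ ->; rewrite // (walk_last wp) /= last_map.
have -> : map qf p = [seq A e ++ e :: B e | e <- p] by apply/eq_in_map.
by rewrite perm_sym (permPl (perm_flatten_splice A B e1 s)) A_e1 B_last cats0.
Qed.

Lemma used_of_edge_flow_gt0 p : p \in P -> {in p, forall e, 0 < edge_flow f e} ->
  exists g, wardrop g /\ 0 < g p.
Proof.
case: p => [nilP _|e1 s pP p_pos].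
  have [q qP fq] := feasible_has_pos (proj1 wf).
  by exists f; rewrite -(Paths_nil nilP qP).
set p := e1 :: s in pP p_pos *.
have /boolp.choice[qf qfP] e : exists q, e \in p -> [/\ q \in P, 0 < f q & e \in q].
  have [/p_pos/edge_flow_gt0_path[q qP [fq eq]]|_] := boolP (e \in p); last by exists [::].
  by exists q.
have [X X_used [sizeX qf_perm]] := splice_used_paths pP qfP.
have qf_cost e : e \in p -> walk_cost (qf e) = mu.
  by case/qfP=> eP fe _; rewrite -path_costE mu_eq.
have p_cost : walk_cost p = mu.
  have : \sum_(w <- p :: X) walk_cost w = \sum_(w <- map qf p) walk_cost w.
    by rewrite -!big_flatten; exact: perm_big.
  have X_cost : {in X, forall w, walk_cost w = mu} by move=> w /X_used[].
  rewrite big_cons big_map (eq_big_seq _ qf_cost) (eq_big_seq _ X_cost).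
  by rewrite !sumr_const_seq sizeX mulrS; exact: addIr.
have [||||||g [wg g_pos]] := @wardrop_reroute (p :: X) (map qf p).
- by move=> w; rewrite inE => /predU1P[->|/X_used[]].
- by move=> _ /mapP[e /qfP[eP _ _] ->].
- by rewrite /= size_map sizeX.
- exact: qf_perm.
- by move=> w; rewrite inE path_costE => /predU1P[->|/X_used[]].
- by move=> _ /mapP[e /qfP[_ fe _] ->].
by exists g; split=> //; rewrite g_pos ?mem_head.
Qed.
End MinimumCost.
End Equilibrium.

(** * Existence of an equilibrium *)

Section RealAnalysis.
Variable R : realType.
Local Notation nonneg := [set x : R | 0 <= x].
Local Notation lebesgue := (@lebesgue_measure R).

Lemma lipschitz_continuous (h : R -> R) (K : R) : 0 <= K ->
  (forall x y, `|h x - h y| <= K * `|x - y|) -> continuous h.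
Proof.
move=> K0 h_lip x; apply/cvgrPdist_lt => eps eps0.
have K1 : 0 < K + 1 by rewrite ltr_wpDl.
apply/nbhs_ballP; exists (eps / (K + 1)) => [|y]; first by rewrite /= divr_gt0.
rewrite /ball /= => xy; apply: le_lt_trans (h_lip x y) _.
apply: le_lt_trans (_ : (K + 1) * `|x - y| < eps); last by rewrite -ltr_pdivlMl // mulrC.
by rewrite ler_wpM2r // lerDl.
Qed.

Lemma continuous_sumr (T : topologicalType) (I : Type) (r : seq I) (P : pred I)
    (F : I -> T -> R) :
  (forall i, P i -> continuous (F i)) -> continuous (fun x => \sum_(i <- r | P i) F i x).
Proof. by apply: (@continuous_big R I +%R 0 P); exact: add_continuous. Qed.

Definition simplex n : set 'rV[R]_n :=
  [set v | (forall i, 0 <= v ord0 i) /\ \sum_(i < n) v ord0 i = 1].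

Lemma simplex_compact n : compact (@simplex n).
Proof.
have -> : @simplex n = [set v : 'rV[R]_n | forall i, `[0, 1]%classic (v ord0 i)]
    `&` ((fun v : 'rV[R]_n => \sum_(i < n) v ord0 i) @^-1` [set 1]).
  apply/seteqP; split=> v /=.
    case=> v0 v1; split=> // i; rewrite in_itv /= v0 -v1.
    by rewrite (bigD1 i) //= lerDl sumr_ge0.
  by case=> v01 v1; split=> // i; have /andP[] := v01 i.
apply: compact_closedI.
  by apply: (@rV_compact R n (fun=> `[0, 1]%classic)) => i; exact: segment_compact.
apply: preimage_closed; last exact: closed_eq.
by move=> v _; apply: continuous_sumr => i _; exact: coord_continuous.
Qed.

Definition row_shift n (v : 'rV[R]_n) (i j : 'I_n) (t : R) : 'rV[R]_n :=
  \row_k (v ord0 k + t * ((k == j)%:R - (k == i)%:R)).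

Lemma row_shift_simplex n (v : 'rV[R]_n) i j t : v \in @simplex n -> i != j ->
  0 <= t <= v ord0 i -> row_shift v i j t \in @simplex n.
Proof.
rewrite !inE => -[v0 v1] ij /andP[t0 tv]; split=> [k|].
  rewrite mxE; have [->|ki] := eqVneq k i.
    by rewrite (negbTE ij) /= sub0r mulrN1; lra.
  by rewrite subr0 addr_ge0 ?mulr_ge0.
under eq_bigr do rewrite mxE.
rewrite big_split -big_distrr sumrB /= (sumr_indicator xpredT) (sumr_indicator xpredT).
by rewrite v1 subrr mulr0 addr0.
Qed.

(* Edge loads of points of the simplex lie in [0, 1]; truncating to [0, 1] lets
   the potential and the shifted costs below be continuous everywhere. *)
Definition clamp (x : R) : R := if x < 0 then 0 else if x < 1 then x else 1.

Lemma clamp01 x : 0 <= clamp x <= 1.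
Proof.
by rewrite /clamp; case: (ltrP x 0) => ?; case: (ltrP x 1) => ?; apply/andP; split; lra.
Qed.

Lemma clamp_id x : 0 <= x <= 1 -> clamp x = x.
Proof.
by rewrite /clamp => /andP[? ?]; case: (ltrP x 0) => ?; case: (ltrP x 1) => ?; lra.
Qed.

Lemma clamp_lipschitz x y : `|clamp x - clamp y| <= `|x - y|.
Proof.
rewrite /clamp ler_norml.
case: (lerP 0 (x - y)) => h; [rewrite (ger0_norm h) | rewrite (ltr0_norm h)];
  case: (ltrP x 0) => ?; case: (ltrP x 1) => ?;
  case: (ltrP y 0) => ?; case: (ltrP y 1) => ?; apply/andP; split; lra.
Qed.

Lemma continuous_within_nonneg_clamp (g : R -> R) :
  {within nonneg, continuous g} -> continuous (g \o clamp).
Proof.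
move=> g_cont x; apply/cvgrPdist_lt => eps eps0.
have /andP[cx0 _] := clamp01 x.
have /cvgrPdist_lt/(_ _ eps0) := (subspace_continuousP _ _).1 g_cont _ cx0.
rewrite near_withinE => /nbhs_ballP[d d0 gd].
apply/nbhs_ballP; exists d => // z; rewrite /ball /= => xz.
apply: gd; last by have /andP[] := clamp01 z.
by rewrite /ball /=; apply: le_lt_trans (clamp_lipschitz _ _) xz.
Qed.

Definition prim (g : R -> R) (y : R) : R :=
  (\int[lebesgue]_(t in `[0, y]) g t)%R.

Section MonotonePrimitive.
Variable g : R -> R.
Hypothesis g_cont : {within nonneg, continuous g}.
Hypothesis g_mono : forall x y, 0 <= x -> x <= y -> g x <= g y.
Hypothesis g_ge0 : forall x, 0 <= x -> 0 <= g x.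

Lemma prim_increment_bounds x y : 0 <= x -> x <= y ->
  g x * (y - x) <= prim g y - prim g x <= g y * (y - x).
Proof.
move=> x0 xy; have y0 := le_trans x0 xy.
have int_g : lebesgue.-integrable `[0, y] (EFin \o g).
  apply: continuous_compact_integrable; first exact: segment_compact.
  by apply: continuous_subspaceW g_cont => t /=; rewrite in_itv /= => /andP[].
have int_cst c : lebesgue.-integrable `]x, y] (EFin \o fun=> c).
  apply: integrableS (_ : lebesgue.-integrable `[x, y] _) => //.
    by apply: subset_itvr; rewrite bnd_simp.
  apply: continuous_compact_integrable; first exact: segment_compact.
  exact/continuous_subspaceT/cst_continuous.
have int_xy : lebesgue.-integrable `]x, y] (EFin \o g).
  by apply: integrableS int_g => //; apply: subset_itvr; rewrite bnd_simp.
have len_xy : fine (lebesgue `]x, y]) = y - x.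
  rewrite lebesgue_measure_itv /= lte_fin; case: ltP => // yx.
  have -> : x = y by apply/le_anti; rewrite xy.
  by rewrite subrr.
rewrite /prim Rintegral_itvB ?bnd_simp //; apply/andP; split.
- rewrite -len_xy -Rintegral_cst //; apply: le_Rintegral => // t.
  by rewrite /= in_itv /= => /andP[xt _]; apply: g_mono => //; exact: ltW.
- rewrite -len_xy -Rintegral_cst //; apply: le_Rintegral => // t.
  by rewrite /= in_itv /= => /andP[xt ty]; apply: g_mono => //; exact: le_trans (ltW xt).
Qed.

Lemma prim_sub_le x y : 0 <= x -> 0 <= y -> prim g y - prim g x <= g y * (y - x).
Proof.
move=> x0 y0; have [xy|yx] := lerP x y; first by case/andP: (prim_increment_bounds x0 xy).
have /andP[+ _] := prim_increment_bounds y0 (ltW yx).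
by rewrite -[y - x]opprB mulrN; lra.
Qed.

Lemma prim_clamp_lipschitz x y :
  `|prim g (clamp x) - prim g (clamp y)| <= g 1 * `|x - y|.
Proof.
wlog le_xy : x y / clamp x <= clamp y.
  move=> wlog_xy; have [|/ltW] := leP (clamp x) (clamp y); first exact: wlog_xy.
  by rewrite distrC [`|x - y|]distrC; exact: wlog_xy.
apply: le_trans (_ : _ <= g 1 * `|clamp x - clamp y|) _.
  have /andP[x0 _] := clamp01 x; have /andP[_ y1] := clamp01 y.
  have /andP[low up] := prim_increment_bounds x0 le_xy.
  rewrite distrC [`|clamp x - _|]distrC !ger0_norm ?subr_ge0 //.
    by apply: le_trans up _; rewrite ler_wpM2r ?subr_ge0 ?g_mono ?(le_trans x0 le_xy).
  by rewrite -subr_ge0; apply: le_trans _ low; rewrite mulr_ge0 ?g_ge0 ?subr_ge0.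
by rewrite ler_wpM2l ?g_ge0 ?clamp_lipschitz.
Qed.
End MonotonePrimitive.
End RealAnalysis.
Arguments simplex {R} n.
Arguments clamp {R}.

Section Existence.
Variables (V E : finType) (src dst : E -> V) (vo vd : V) (R : realType) (m : nat).
Variables (C : 'I_m -> E -> R -> R) (phi : 'I_m -> R).
Hypothesis Paths_neq0 : Paths src dst vo vd != [::].
Hypothesis C_cont : forall s e, {within [set x : R | 0 <= x], continuous (C s e : R -> R)}.
Hypothesis C_incr : forall s e (x y : R), 0 <= x -> x < y -> C s e x < C s e y.
Hypothesis C_ge0 : forall s e (x : R), 0 <= x -> 0 <= C s e x.
Hypothesis phi_simplex : in_simplex phi.
Local Notation P := (Paths src dst vo vd).
Local Notation n := (size P).
Local Notation c := (edge_cost C phi).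
Local Notation path_cost := (path_cost src dst vo vd C phi).

(* A point v of the simplex puts flow v_i on the i-th path of P. *)
Definition row_flow (v : 'rV[R]_n) (q : seq E) : R :=
  \sum_(i < n | nth [::] P i == q) v ord0 i.

Definition row_load (v : 'rV[R]_n) (e : E) : R :=
  \sum_(i < n | e \in nth [::] P i) v ord0 i.

Lemma row_flow_nth v (i : 'I_n) : row_flow v (nth [::] P i) = v ord0 i.
Proof.
rewrite /row_flow (bigD1 i) //= big1 ?addr0 // => j /andP[/eqP Pj ji].
case/eqP: ji; apply/val_inj/eqP.
by rewrite -(nth_uniq [::] (ltn_ord j) (ltn_ord i) (undup_uniq _)) Pj.
Qed.

Lemma Paths_nth q : q \in P -> exists i : 'I_n, nth [::] P i = q.
Proof. by move=> qP; exists (Ordinal (etrans (index_mem q P) qP)); exact: nth_index. Qed.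

Lemma edge_flow_row_flow v e : edge_flow src dst vo vd (row_flow v) e = row_load v e.
Proof.
rewrite /edge_flow (big_nth [::]) big_mkord; apply: eq_bigr => i _.
exact: row_flow_nth.
Qed.

Lemma row_flow_feasible v : v \in simplex n -> feasible src dst vo vd (row_flow v).
Proof.
rewrite inE => -[v0 v1]; split=> [q /Paths_nth[i <-]|]; first by rewrite row_flow_nth.
by rewrite (big_nth [::]) big_mkord -v1; apply: eq_bigr => i _; exact: row_flow_nth.
Qed.

Lemma row_load01 v e : v \in simplex n -> 0 <= row_load v e <= 1.
Proof.
rewrite inE => -[v0 v1]; rewrite sumr_ge0 //= -v1 /row_load big_mkcond.
by apply: ler_sum => i _; case: ifP.
Qed.

Lemma row_load_shift v i j t e : row_load (row_shift v i j t) e =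
  row_load v e + t * ((e \in nth [::] P j)%:R - (e \in nth [::] P i)%:R).
Proof.
rewrite /row_load; under eq_bigr do rewrite mxE.
by rewrite big_split -big_distrr sumrB /= !sumr_indicator.
Qed.

Lemma edge_cost_continuous e : {within [set x : R | 0 <= x], continuous (c e)}.
Proof.
apply: (@continuous_sumr R (subspace [set x : R | 0 <= x])) => s _ x.
by apply: continuousM; [exact: cst_continuous | exact: C_cont].
Qed.

Definition potential (v : 'rV[R]_n) : R :=
  \sum_(e : E) prim (c e) (clamp (row_load v e)).

Lemma potential_continuous : continuous potential.
Proof.
apply: continuous_sumr => e _ v.
have load_cont : continuous (row_load^~ e).
  by apply: continuous_sumr => i _; exact: coord_continuous.
have prim_cont : continuous (prim (c e) \o clamp).
  apply: lipschitz_continuous (edge_cost_ge0 C_ge0 phi_simplex e ler01) _ => x y /=.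
  exact: prim_clamp_lipschitz (@edge_cost_continuous e)
    (edge_cost_le C_incr phi_simplex e) (edge_cost_ge0 C_ge0 phi_simplex e) x y.
exact: continuous_comp (load_cont v) (prim_cont _).
Qed.

Lemma potential_sub_le v w : v \in simplex n -> w \in simplex n ->
  potential w - potential v <=
  \sum_(e : E) c e (row_load w e) * (row_load w e - row_load v e).
Proof.
move=> vS wS; rewrite /potential -sumrB; apply: ler_sum => e _.
have /andP[v0 _] := row_load01 e vS; have /andP[w0 _] := row_load01 e wS.
rewrite !clamp_id ?row_load01 //.
exact: prim_sub_le (@edge_cost_continuous e) (edge_cost_le C_incr phi_simplex e) _ _ v0 w0.
Qed.

Lemma path_cost_row_flow v q : q \in P ->
  path_cost (row_flow v) q = \sum_(e : E) (e \in q)%:R * c e (row_load v e).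
Proof.
move=> /Paths_uniq uq; rewrite path_costE (big_uniq _ uq) big_mkcond.
apply: eq_bigr => e _; rewrite edge_flow_row_flow.
by case: (e \in q); rewrite ?mul1r ?mul0r.
Qed.

Lemma shifted_cost_continuous v (d : E -> R) :
  continuous (fun t : R => \sum_(e : E) c e (clamp (row_load v e + t * d e)) * d e).
Proof.
apply: continuous_sumr => e _.
have affine_cont : continuous (fun t : R => row_load v e + t * d e).
  move=> x; apply: cvgD; first exact: cvg_cst.
  by apply: cvgM; [exact: cvg_id | exact: cvg_cst].
have cost_cont : continuous (fun t : R => c e (clamp (row_load v e + t * d e))).
  move=> x; apply: (continuous_comp (g := c e \o clamp) (affine_cont x)).
  by have := continuous_within_nonneg_clamp (@edge_cost_continuous e); apply.
by move=> x; apply: cvgM; [exact: cost_cont | exact: cvg_cst].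
Qed.

(* Moving t units of flow from p to r changes the potential by at most t * S t,
   and S 0 is the cost difference of r and p. *)
Lemma potential_descent v p r : v \in simplex n -> p \in P -> r \in P ->
  0 < row_flow v p ->
  path_cost (row_flow v) r < path_cost (row_flow v) p ->
  exists2 w, w \in simplex n & potential w < potential v.
Proof.
move=> vS pP rP fp cost_lt.
have [i Pi] := Paths_nth pP; have [j Pj] := Paths_nth rP.
have ij : i != j by apply: contraTneq cost_lt => ij; rewrite -Pi -Pj ij ltxx.
have vi_gt0 : 0 < v ord0 i by rewrite -row_flow_nth Pi.
pose d e := ((e \in r)%:R - (e \in p)%:R : R).
pose S t := \sum_(e : E) c e (clamp (row_load v e + t * d e)) * d e.
have S0 : S 0 < 0.
  rewrite -subr_lt0 !path_cost_row_flow // -sumrB in cost_lt; apply: le_lt_trans cost_lt.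
  rewrite le_eqVlt; apply/orP; left; apply/eqP/eq_bigr => e _.
  by rewrite mul0r addr0 clamp_id ?row_load01 // /d mulrBr ![c _ _ * _]mulrC.
have S_cont : continuous S := @shifted_cost_continuous v d.
near (0 : R)^'+ => t.
have t_gt0 : 0 < t by near: t; exact: nbhs_right_gt.
have t_le : t <= v ord0 i by near: t; exact: nbhs_right_le.
have St : S t < 0 by near: t; apply: cvgr_lt S0; exact: cvg_within_filter (S_cont 0).
set w := row_shift v i j t.
have wS : w \in simplex n by apply: row_shift_simplex; rewrite ?ltW.
exists w => //.
have load_w e : row_load w e = row_load v e + t * d e by rewrite row_load_shift Pi Pj.
rewrite -subr_lt0; apply: le_lt_trans (potential_sub_le vS wS) _.
rewrite (eq_bigr (fun e => t * (c e (clamp (row_load v e + t * d e)) * d e))).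
  by rewrite -mulr_sumr pmulr_rlt0.
move=> e _; rewrite -load_w (clamp_id (row_load01 e wS)) load_w.
by rewrite addrAC subrr add0r mulrCA.
Unshelve. all: by end_near.
Qed.

Lemma exists_wardrop : exists f, wardrop src dst vo vd C phi f.
Proof.
have n_gt0 : (0 < n)%N by rewrite lt0n size_eq0.
have simplex_neq0 : @simplex R n !=set0.
  exists (\row_k ((k == Ordinal n_gt0)%:R : R)); split=> [k|]; first by rewrite mxE ler0n.
  by under eq_bigr do rewrite mxE; rewrite (sumr_indicator xpredT).
have [v vS v_min] := EVT_min_rV simplex_neq0 (@simplex_compact R n)
  (continuous_subspaceT potential_continuous).
exists (row_flow v); split=> [|p pP fp r rP]; first exact: row_flow_feasible.
rewrite leNgt; apply/negP => cost_lt.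
have [w wS] := potential_descent vS pP rP fp cost_lt.
by apply/negP; rewrite -leNgt v_min.
Qed.
End Existence.

Theorem lemma2 (V E : finType) (src dst : E -> V) (vo vd : V)
  (R : realType) (m : nat) (C : 'I_m -> E -> R -> R)
  (hP : Paths src dst vo vd != [::])
  (hcont : forall s e, {within [set x : R | 0 <= x], continuous (C s e : R -> R)})
  (hincr : forall s e (x y : R), 0 <= x -> x < y -> C s e x < C s e y)
  (hpos : forall s e (x : R), 0 <= x -> 0 <= C s e x)
  (phi : 'I_m -> R) (hphi : in_simplex phi) :
  (exists f, wardrop src dst vo vd C phi f /\
     forall p, used_route src dst vo vd C phi p -> 0 < f p) /\
  (forall f, wardrop src dst vo vd C phi f ->
     forall p, p \in Paths src dst vo vd ->
       (used_route src dst vo vd C phi p <->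
        forall e, e \in p -> 0 < edge_flow src dst vo vd f e)).
Proof.
split=> [|f wf p pP]; last first.
  split=> [[_ [h [wh hp]]] e ep|p_pos].
    rewrite (wardrop_edge_flow_eq hincr hphi wf wh).
    exact: lt_le_trans hp (path_flow_le_edge_flow (proj1 wh) pP ep).
  have [mu [mu_le mu_eq]] := wardrop_min_cost wf.
  by split=> //; apply: (used_of_edge_flow_gt0 _ _ _ wf mu_le mu_eq pP).
have [f0 wf0] := exists_wardrop hP hcont hincr hpos hphi.
have /boolp.choice[H wH] q : exists h, wardrop src dst vo vd C phi h /\
    (used_route src dst vo vd C phi q -> 0 < h q).
  case: (pselect (used_route src dst vo vd C phi q)) => [[_ [h []]]|]; first by exists h.
  by exists f0.
have [g [wg g_pos]] := wardrop_mean hincr hphi hP (fun q => (wH q).1).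
by exists g; split=> // p up; apply: g_pos up.1 up.1 ((wH p).2 up).
Qed.
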